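(* Every strong (i.e. strongly connected) tournament $T$ is $2^{*}$-weakly connected.
   Context: A tournament is a digraph in which each pair of distinct vertices is joined by exactly one arc; $x$ dominates $y$ if $xy$ is an arc. Paths are directed paths. For distinct vertices $u,v$ of a digraph $D$, a weak $k^{*}$-container between $u$ and $v$ is a set of $k$ internally disjoint paths, each of which is either a $(u,v)$-path or a $(v,u)$-path (different paths may have different directions), whose union contains every vertex of $D$. A strong $k^{*}$-container between $u$ and $v$ is a set of $k$ internally disjoint paths that are either all $(u,v)$-paths or all $(v,u)$-paths, whose union contains every vertex of $D$. $D$ is $k^{*}$-weakly (resp. $k^{*}$-strongly) connected if there is a weak (resp. strong) $k^{*}$-container between every two distinct vertices of $D$. *)

From mathcomp Require Import all_boot.
Set Implicit Arguments. Unset Strict Implicit. Unset Printing Implicit Defensive.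

Section Digraph.
Variable T : finType.

Definition tournament (e : rel T) : Prop :=
  (forall x, ~~ e x x) /\ (forall x y, x != y -> e x y != e y x).

Definition strong (e : rel T) : Prop := forall x y, connect e x y.

Definition dpath (e : rel T) (u v : T) (p : seq T) : bool :=
  match p with
  | [::] => false
  | x :: s => [&& x == u, last x s == v, path e x s & uniq (x :: s)]
  end.

(* Since both paths have endpoint set {u,v} and are duplicate-free, being
   internally disjoint means their only common vertices are u and v. *)
Definition weak2_container (e : rel T) (u v : T) (p1 p2 : seq T) : Prop :=
  [/\ dpath e u v p1 || dpath e v u p1,
      dpath e u v p2 || dpath e v u p2,
      p1 != p2,
      (forall x, x \in p1 -> x \in p2 -> (x == u) || (x == v)) &
      (forall x, (x \in p1) || (x \in p2))].

Definition weakly_2star_connected (e : rel T) : Prop :=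
  forall u v, u != v -> exists p1 p2, weak2_container e u v p1 p2.

End Digraph.

(* Camion's theorem: a strong tournament has a Hamiltonian cycle; cutting it at
   u and v gives a (u,v)-path and a (v,u)-path that meet only in u and v and
   cover every vertex.  The Hamiltonian cycle is grown one vertex at a time.
   A vertex x outside the cycle C that both dominates and is dominated by C can
   be inserted between consecutive cycle vertices a -> b with a -> x -> b.  If
   there is no such vertex, the outside vertices split into those dominated by
   all of C and those dominating all of C; strong connectivity gives an arc
   a -> b from the first kind to the second, and C can be closed up through
   a and b. *)
From mathcomp Require Import all_boot zify.
Set Implicit Arguments. Unset Strict Implicit. Unset Printing Implicit Defensive.

Section Camion.
Variable T : finType.
Variable e : rel T.

(* A tournament has no loops, so a single vertex is admitted as a degenerate
   cycle to start the induction. *)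
Definition ucycle1 (c : seq T) :=
  [&& 0 < size c, uniq c & cycle e c || (size c == 1)].

Lemma ucycle1_rot n c : ucycle1 c -> ucycle1 (rot n c).
Proof. by rewrite /ucycle1 rot_uniq rot_cycle size_rot. Qed.

Lemma ucycle1_path y s : ucycle1 (y :: s) -> path e y s.
Proof.
case/and3P=> _ _ /orP[]; first by rewrite /= rcons_path; case/andP.
by case: s.
Qed.

Lemma ucycle1_size c : ucycle1 c -> size c <= #|T|.
Proof. by case/and3P=> _ /card_uniqP <- _; apply: max_card. Qed.

Lemma ucycle1_cycle c u v :
  ucycle1 c -> u \in c -> v \in c -> u != v -> cycle e c.
Proof.
case/and3P=> _ _ /orP[//|]; case: c => [|w [|//]] _ //.
by rewrite !inE => /eqP -> /eqP ->; rewrite eqxx.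
Qed.

Lemma path_first_exit (A : pred T) x p : path e x p -> A x -> ~~ A (last x p) ->
  exists a b, [/\ A a, ~~ A b & e a b].
Proof.
elim: p x => [|y p IH] x /=; first by move=> _ ->.
case/andP=> exy ep Ax Alast; case Ay: (A y); first exact: IH ep Ay Alast.
by exists x, y; rewrite Ay.
Qed.

Lemma rot_at_arc (b0 : T) s0 p a b q : b0 :: rcons s0 b0 = p ++ a :: b :: q ->
  exists n s, rot n (b0 :: s0) = b :: s /\ last b s = a.
Proof.
case/lastP: q => [|q z].
  have -> : p ++ [:: a; b] = rcons (rcons p a) b by rewrite -!cats1 -catA.
  rewrite -rcons_cons => /rcons_inj [E1 <-].
  exists 0, s0; rewrite rot0; split => //.
  by rewrite -(last_cons b0) E1 last_rcons.
rewrite -!rcons_cons -rcons_cat => /rcons_inj [E1 _].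
exists (size (rcons p a)), (q ++ rcons p a).
by rewrite E1 -cat_rcons rot_size_cat last_cat last_rcons.
Qed.

Hypothesis tour : tournament e.

Lemma tour_irrefl x : ~~ e x x. Proof. by case: tour. Qed.

Lemma tour_arc_neq a b : e a b -> a != b.
Proof. by apply: contraTneq => ->; apply: tour_irrefl. Qed.

Lemma tour_asym a b : e a b -> ~~ e b a.
Proof.
by move=> eab; have := (proj2 tour) a b (tour_arc_neq eab); rewrite eab; case: (e b a).
Qed.

Lemma tour_total a b : a != b -> ~~ e a b -> e b a.
Proof.
by move=> ab; have := (proj2 tour) a b ab; case: (e a b); case: (e b a).
Qed.

Definition dominated_by (c : seq T) x := has (fun z => e z x) c.
Definition dominates (c : seq T) x := has (e x) c.

Lemma notin_dominated_by c x : x \notin c -> ~~ dominates c x -> {in c, forall z, e z x}.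
Proof.
move=> xc /hasPn xc_out z zc; apply: tour_total (xc_out z zc).
by apply: contraNneq xc => ->.
Qed.

Lemma notin_dominates c x : x \notin c -> ~~ dominated_by c x -> {in c, forall z, e x z}.
Proof.
move=> xc /hasPn xc_in z zc; apply: tour_total (xc_in z zc).
by apply: contraNneq xc => <-.
Qed.

Lemma insertion_point x w t : x \notin w :: t -> e x (last w t) ->
  dominated_by (w :: t) x ->
  exists p a b q, w :: t = p ++ a :: b :: q /\ e a x /\ e x b.
Proof.
elim: t w => [|w1 t IH] w xwt /= exlast.
  by rewrite orbF => ewx; move: (tour_asym exlast); rewrite ewx.
have xr : x \notin w1 :: t by apply: contra xwt => h; rewrite in_cons h orbT.
case/orP=> [ewx|dom].
  case exw1: (e x w1); first by exists [::], w, w1, t.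
  have ew1x : e w1 x.
    by apply: tour_total; rewrite ?exw1 //; apply: contraNneq xr => ->; rewrite mem_head.
  have [|p [a [b [q [-> hab]]]]] := IH w1 xr exlast; first by rewrite /= ew1x.
  by exists (w :: p), a, b, q.
have [p [a [b [q [-> hab]]]]] := IH w1 xr exlast dom.
by exists (w :: p), a, b, q.
Qed.

Lemma ucycle1_insert c x : ucycle1 c -> x \notin c ->
  dominated_by c x -> dominates c x ->
  exists c', ucycle1 c' /\ size c < size c'.
Proof.
move=> cc xc din /hasP [b0 b0c exb0].
have [i s0 Er] := rot_to b0c.
have cc0 : ucycle1 (b0 :: s0) by rewrite -Er ucycle1_rot.
have x_notin : x \notin b0 :: rcons s0 b0.
  by rewrite -rcons_cons mem_rcons inE -Er mem_rot negb_or xc andbT (tour_arc_neq exb0).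
have din' : dominated_by (b0 :: rcons s0 b0) x.
  case/hasP: din => z zc ezx; apply/hasP; exists z => //.
  by rewrite -rcons_cons mem_rcons inE -Er mem_rot zc orbT.
have exlast : e x (last b0 (rcons s0 b0)) by rewrite last_rcons.
have [p [a [b [q [Ed [eax exb]]]]]] := insertion_point x_notin exlast din'.
have [n [s [Er2 Hl]]] := rot_at_arc Ed.
have ccb : ucycle1 (b :: s) by rewrite -Er2 ucycle1_rot.
have xbs : x \notin b :: s by rewrite -Er2 mem_rot -Er mem_rot.
exists (x :: b :: s); split.
- rewrite /ucycle1 /= exb rcons_path (ucycle1_path ccb) Hl eax xbs.
  by case/and3P: ccb => _; rewrite cons_uniq => /andP[-> ->].
- by rewrite /= -[size c](size_rot i) Er -(size_rot n) Er2.
Qed.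

Lemma ucycle1_insert_arc c a b : ucycle1 c -> a \notin c -> b \notin c ->
  ~~ dominates c a -> ~~ dominated_by c b -> e a b ->
  exists c', ucycle1 c' /\ size c < size c'.
Proof.
move=> cc ac bc na nb eab.
have ca := notin_dominated_by ac na; have bc' := notin_dominates bc nb.
clear na nb; case: c cc ac bc ca bc' => [//|y s] cc ac bc ca bc'.
exists [:: a, b, y & s]; split => //.
rewrite /ucycle1 /= rcons_path eab (bc' y (mem_head _ _)) (ucycle1_path cc).
rewrite (ca _ (mem_last y s)) !inE negb_or (tour_arc_neq eab) /= ac bc.
by case/and3P: cc => _; rewrite cons_uniq => /andP[-> ->].
Qed.

Hypothesis str : strong e.

Lemma exists_in_out_arc c y x0 : y \in c -> x0 \notin c ->
  (forall x, x \notin c -> ~~ (dominated_by c x && dominates c x)) ->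
  exists a b, [/\ a \notin c, b \notin c, ~~ dominates c a, ~~ dominated_by c b & e a b].
Proof.
move=> yc x0c one_sided.
have out_only x : x \notin c -> dominates c x -> ~~ dominated_by c x.
  by move=> xc dx; apply: contra (one_sided x xc) => ->.
have in_only x : x \notin c -> dominated_by c x -> ~~ dominates c x.
  by move=> xc dx; apply: contra (one_sided x xc); rewrite dx.
case: (boolP (dominates c x0)) => dx0.
  have [p ep Ep] := connectP (str y x0).
  pose A := [pred z | (z \in c) || dominated_by c z].
  have Ay : A y by rewrite /= yc.
  have Alast : ~~ A (last y p) by rewrite /= -Ep negb_or x0c out_only.
  have [a [b [Aa Ab eab]]] := path_first_exit ep Ay Alast.
  move: Aa Ab; rewrite /= negb_or => Aa /andP[bc nb].
  have ac : a \notin c by apply: contra nb => ac; apply/hasP; exists a.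
  move: Aa; rewrite (negbTE ac) /= => da.
  by exists a, b; rewrite ac bc nb in_only.
have [p ep Ep] := connectP (str x0 y).
pose A := [pred z | (z \notin c) && ~~ dominates c z].
have Ax0 : A x0 by rewrite /= x0c.
have Alast : ~~ A (last x0 p) by rewrite /= -Ep yc.
have [a [b [/andP[ac na] Ab eab]]] := path_first_exit ep Ax0 Alast.
have bc : b \notin c by apply: contra na => bc; apply/hasP; exists b.
move: Ab; rewrite /= bc /= negbK => db.
by exists a, b; rewrite ac bc na out_only.
Qed.

Lemma ucycle1_extend c x0 : ucycle1 c -> x0 \notin c ->
  exists c', ucycle1 c' /\ size c < size c'.
Proof.
move=> cc x0c.
have [y yc] : exists y, y \in c.
  by case: c cc {x0c} => // y s _; exists y; rewrite mem_head.
case: (boolP [exists x, [&& x \notin c, dominated_by c x & dominates c x]]).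
  by case/existsP => x /and3P [xc din dout]; apply: ucycle1_insert din dout.
rewrite negb_exists => /forallP one_sided.
have [|a [b [ac bc na nb eab]]] := exists_in_out_arc yc x0c.
  by move=> x xc; move: (one_sided x); rewrite xc.
exact: ucycle1_insert_arc eab.
Qed.

Theorem camion (x : T) : exists c, ucycle1 c /\ forall y, y \in c.
Proof.
suff grow n c : #|T| - size c <= n -> ucycle1 c ->
    exists c, ucycle1 c /\ forall y, y \in c.
  by apply: (grow #|T| [:: x]); rewrite ?leq_subr // /ucycle1 /= orbT.
elim: n c => [|n IH] c hn cc;
  case: (pickP (fun y => y \notin c)) => [x0 x0c|all_in];
  try by exists c; split => // y; move/negbFE: (all_in y).
all: have [c' [cc' lt]] := ucycle1_extend cc x0c; have := ucycle1_size cc'.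
- by lia.
- by move=> le; apply: (IH c') => //; lia.
Qed.

End Camion.

Lemma spanning_cycle_weak2_container (T : finType) (e : rel T) u v s :
  u != v -> uniq (u :: s) -> cycle e (u :: s) -> (forall x, x \in u :: s) ->
  exists p1 p2, weak2_container e u v p1 p2.
Proof.
move=> uv us cyc cover.
have vs : v \in s by move: (cover v); rewrite inE eq_sym (negbTE uv).
case/splitPr: vs us cyc cover => s1 s2 us cyc cover.
move: cyc; rewrite /cycle rcons_cat /= cat_path /= => /and3P [p1 ev p2].
have U1 : uniq ((u :: rcons s1 v) ++ s2) by rewrite cat_cons cat_rcons.
have U2 : uniq ((v :: rcons s2 u) ++ s1).
  suff -> : (v :: rcons s2 u) ++ s1 = rot (size (u :: s1)) ((u :: s1) ++ v :: s2).
    by rewrite rot_uniq.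
  by rewrite rot_size_cat cat_cons cat_rcons.
move: U1 U2; rewrite !cat_uniq => /and3P [q1 q2 _] /and3P [q3 _ _].
exists (u :: rcons s1 v), (v :: rcons s2 u); split.
- by rewrite /dpath eqxx last_rcons eqxx rcons_path p1 ev q1.
- by rewrite /dpath eqxx last_rcons eqxx p2 q3 orbT.
- by apply: contra_neq uv => -[].
- move=> x x1 x2; apply: contraR q2 => not_uv; apply/hasP; exists x => //.
  by move: x2 not_uv; rewrite !(inE, mem_rcons) => /or3P[->|->|] //; rewrite orbT.
- move=> x; move: (cover x); rewrite !(inE, mem_rcons, mem_cat).
  by case: (x == u); case: (x == v); case: (x \in s1); case: (x \in s2); rewrite ?orbT.
Qed.

Theorem proposition2p6 (T : finType) (e : rel T) :
  tournament e -> strong e -> weakly_2star_connected e.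
Proof.
move=> tour str u v uv.
have [c [cc cover]] := camion tour str u.
have [i s Er] := rot_to (cover u).
have cover' x : x \in u :: s by rewrite -Er mem_rot.
have ccu : ucycle1 e (u :: s) by rewrite -Er ucycle1_rot.
apply: (spanning_cycle_weak2_container uv).
- by case/and3P: ccu => _ us _; exact: us.
- exact: ucycle1_cycle ccu (cover' u) (cover' v) uv.
- exact: cover'.
Qed.
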